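(* The relation $\prec$ on phasers, restricted to the set $\mathcal{P}^{WO}$ of well-ordered phasers, is a causality relation: (i) for all $P,Q,R\in\mathcal{P}^{WO}$, if $P\prec Q$ and $Q\prec R$ then $P\prec R$; (ii) for all $P\in\mathcal{P}^{WO}$, $\neg(P\prec P)$; (iii) for all $P,Q\in\mathcal{P}^{WO}$, if $P\prec Q$ then $\neg(Q\prec P)$.
   Context: A view is a record $v=(\mathrm{sp}(v),\mathrm{wp}(v),\mathrm{mode}(v))$ with $\mathrm{sp}(v),\mathrm{wp}(v)\in\mathbb{N}$ and $\mathrm{mode}(v)\in\{\mathtt{SW},\mathtt{SO},\mathtt{WO}\}$. $\mathrm{CanSignal}(v)$ iff $\mathrm{mode}(v)\in\{\mathtt{SW},\mathtt{SO}\}$; $\mathrm{CanWait}(v)$ iff $\mathrm{mode}(v)\in\{\mathtt{SW},\mathtt{WO}\}$. A phaser $P$ is a finite partial map from task identifiers to views. For views, $v_1\prec v_2$ iff $\mathrm{CanSignal}(v_1)$, $\mathrm{sp}(v_1)<\mathrm{wp}(v_2)$ and $\mathrm{CanWait}(v_2)$; and $v_1\unrhd v_2$ iff $\mathrm{mode}(v_1)=\mathtt{WO}$ or $\mathrm{sp}(v_1)\ge\mathrm{wp}(v_2)$ or $\mathrm{mode}(v_2)=\mathtt{SO}$. For phasers, $P\prec Q$ iff there exist $t\in\mathrm{dom}\,P$, $t'\in\mathrm{dom}\,Q$ with $P(t)\prec Q(t')$; $P\unrhd Q$ iff $P(t)\unrhd Q(t')$ for all $t\in\mathrm{dom}\,P$,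 $t'\in\mathrm{dom}\,Q$. $P$ is well-ordered iff $P\unrhd P$. *)

From mathcomp Require Import all_boot.
From mathcomp Require Import finmap.
Set Implicit Arguments. Unset Strict Implicit. Unset Printing Implicit Defensive.
Local Open Scope fmap_scope.

Inductive mode := SW | SO | WO.

Record view := View { sp : nat; wp : nat; vmode : mode }.

Definition CanSignal (v : view) : Prop := vmode v = SW \/ vmode v = SO.
Definition CanWait (v : view) : Prop := vmode v = SW \/ vmode v = WO.

Definition view_prec (v1 v2 : view) : Prop :=
  CanSignal v1 /\ sp v1 < wp v2 /\ CanWait v2.

Definition view_ge (v1 v2 : view) : Prop :=
  vmode v1 = WO \/ wp v2 <= sp v1 \/ vmode v2 = SO.

(* A phaser: finite partial map from task identifiers (of type T) to views. *)
Definition phaser (T : choiceType) := {fmap T -> view}.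

Definition phaser_prec (T : choiceType) (P Q : phaser T) : Prop :=
  exists t t' v v', P.[? t] = Some v /\ Q.[? t'] = Some v' /\ view_prec v v'.

Definition phaser_ge (T : choiceType) (P Q : phaser T) : Prop :=
  forall t t' v v', P.[? t] = Some v -> Q.[? t'] = Some v' -> view_ge v v'.

Definition well_ordered (T : choiceType) (P : phaser T) : Prop := phaser_ge P P.

From mathcomp Require Import all_boot.
From mathcomp Require Import finmap.
Set Implicit Arguments. Unset Strict Implicit. Unset Printing Implicit Defensive.

(* A well-ordered phaser Q never waits on its own signals: if v2 can signal and
   v1 can wait in Q then wp v1 <= sp v2.  Hence any chain v ≺ v1, v2 ≺ w through
   Q gives sp v < wp v1 <= sp v2 < wp w, i.e. v ≺ w.  Irreflexivity is the same
   inequality applied to a single pair, and asymmetry follows from both. *)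

Lemma view_ge_wp_le_sp (v1 v2 : view) :
  view_ge v1 v2 -> CanSignal v1 -> CanWait v2 -> wp v2 <= sp v1.
Proof.
by case=> [|[|]] Hmode // [] Hs [] Hw //; rewrite ?Hmode in Hs Hw.
Qed.

Lemma view_prec_ge_prec (v1 v2 v3 v4 : view) :
  view_prec v1 v2 -> view_ge v3 v2 -> view_prec v3 v4 -> view_prec v1 v4.
Proof.
move=> [S1 [lt12 W2]] ge32 [S3 [lt34 W4]]; split=> //; split=> //.
have le23 := view_ge_wp_le_sp ge32 S3 W2.
by rewrite (ltn_trans lt12) // (leq_ltn_trans le23).
Qed.

Lemma view_ge_prec_irrefl (v1 v2 : view) :
  view_ge v1 v2 -> ~ view_prec v1 v2.
Proof.
move=> ge12 [S1 [lt12 W2]].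
by have := view_ge_wp_le_sp ge12 S1 W2; rewrite leqNgt lt12.
Qed.

Section PhaserCausality.

Variable T : choiceType.

Lemma phaser_prec_trans (P Q R : phaser T) : well_ordered Q ->
  phaser_prec P Q -> phaser_prec Q R -> phaser_prec P R.
Proof.
move=> wQ [t [t1 [v [v1 [Pt [Qt1 prec1]]]]]] [t2 [t3 [v2 [v3 [Qt2 [Rt3 prec2]]]]]].
exists t, t3, v, v3; do 2 split=> //.
exact: view_prec_ge_prec prec1 (wQ _ _ _ _ Qt2 Qt1) prec2.
Qed.

Lemma phaser_prec_irrefl (P : phaser T) : well_ordered P -> ~ phaser_prec P P.
Proof.
move=> wP [t [t1 [v [v1 [Pt [Pt1 prec]]]]]].
exact: view_ge_prec_irrefl (wP _ _ _ _ Pt Pt1) prec.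
Qed.

End PhaserCausality.

Theorem theorem1 (T : choiceType) :
  (forall P Q R : phaser T, well_ordered P -> well_ordered Q -> well_ordered R ->
     phaser_prec P Q -> phaser_prec Q R -> phaser_prec P R) /\
  (forall P : phaser T, well_ordered P -> ~ phaser_prec P P) /\
  (forall P Q : phaser T, well_ordered P -> well_ordered Q ->
     phaser_prec P Q -> ~ phaser_prec Q P).
Proof.
split; last split.
- by move=> P Q R _ wQ _; apply: phaser_prec_trans.
- exact: phaser_prec_irrefl.
- move=> P Q wP wQ PQ QP.
  exact: phaser_prec_irrefl wP (phaser_prec_trans wQ PQ QP).
Qed.
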